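(* Let $q$ be a prime power and let $1 \le k \le m$ be integers. Then $\Lambda_q(k,m) = \mathcal{A}^G_q(k,m)$; that is, an $\mathbb{F}_{q^m}$-linear subspace $V \subseteq \mathbb{F}_{q^m}^k$ is Frobenius-closed if and only if $\dim_{\mathbb{F}_{q^m}}(V) = \mathrm{maxrk}(V)$.
   Context: For $v=(v_1,\dots,v_k)\in\mathbb{F}_{q^m}^k$, $\mathrm{rk}(v):=\dim_{\mathbb{F}_q}\mathrm{Span}_{\mathbb{F}_q}\{v_1,\dots,v_k\}$. For an $\mathbb{F}_{q^m}$-subspace $C\subseteq \mathbb{F}_{q^m}^k$ (a Gabidulin code), $\mathrm{maxrk}(C):=\max\{\mathrm{rk}(c): c\in C\}$; one always has $\dim_{\mathbb{F}_{q^m}}(C)\le \mathrm{maxrk}(C)$. $\mathcal{A}^G_q(k,m)$ denotes the set of $\mathbb{F}_{q^m}$-subspaces $C\subseteq\mathbb{F}_{q^m}^k$ with $\dim_{\mathbb{F}_{q^m}}(C)=\mathrm{maxrk}(C)$ (optimal Gabidulin anticodes). For $v\in\mathbb{F}_{q^m}^k$ let $v^q:=(v_1^q,\dots,v_k^q)$; a subspace $V\subseteq \mathbb{F}_{q^m}^k$ is Frobenius-closed if $v^q\in V$ for all $v\in V$. $\Lambda_q(k,m)$ denotes the set of Frobenius-closed $\mathbb{F}_{q^m}$-subspaces of $\mathbb{F}_{q^m}^k$ (including the zero space). *)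

From HB Require Import structures.
From mathcomp Require Import all_boot all_order all_algebra all_field.
Set Implicit Arguments. Unset Strict Implicit. Unset Printing Implicit Defensive.
Import GRing.Theory.
Local Open Scope ring_scope.

(* Setting: F is the finite field F_q (q = #|F|, automatically a prime power),
   L is a field extension of F with [L : F] = m, i.e. L = F_{q^m}.
   Vectors of L^k are row vectors 'rV[L]_k; F_{q^m}-subspaces of L^k are
   row spaces of matrices V : 'M[L]_k (every subspace arises this way). *)

Definition rk (F : finFieldType) (L : fieldExtType F) (k : nat) (v : 'rV[L]_k) : nat :=
  \dim <<[seq v ord0 i | i : 'I_k]>>%VS.

Definition is_maxrk (F : finFieldType) (L : fieldExtType F) (k : nat)
    (V : 'M[L]_k) (n : nat) : Prop :=
  (exists2 v : 'rV[L]_k, (v <= V)%MS & rk v = n) /\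
  (forall v : 'rV[L]_k, (v <= V)%MS -> (rk v <= n)%N).

Definition frobv (F : finFieldType) (L : fieldExtType F) (k : nat) (v : 'rV[L]_k)
  : 'rV[L]_k := map_mx (fun x => x ^+ #|F|) v.

Definition frobenius_closed (F : finFieldType) (L : fieldExtType F) (k : nat)
    (V : 'M[L]_k) : Prop :=
  forall v : 'rV[L]_k, (v <= V)%MS -> (frobv v <= V)%MS.

(* A Frobenius-closed space V contains, along with v, the rows v^(q^i) of the
   Moore matrix of v; they are independent for i < rk v, since a nonzero
   q-polynomial with rk v terms has degree at most q^(rk v - 1) and cannot vanish
   on the q^(rk v) elements of the F_q-span of the entries of v.  So rk v <= dim V.
   Conversely let v have maximal rank r < m in V and w lie in V.  If w violated
   an F_q-relation a among the entries of v, then for every mu the r + 1 elements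
   w.a and w.A_i + mu e_i of the span of the entries of w + mu v (e a basis of
   the span for v, v.A_i = e_i) would be dependent; a dependence determines mu,
   so q^m <= q^(r+1) - 1, which is absurd.  Hence V lies in the row space of the
   F_q-rational matrix of coordinates of v, which has r rows and is
   Frobenius-closed: dim V <= r, with equality exactly when V is that space. *)

From HB Require Import structures.
From Stdlib Require Import Classical.
From mathcomp Require Import all_boot all_order all_algebra all_field.
Set Implicit Arguments. Unset Strict Implicit. Unset Printing Implicit Defensive.
Import GRing.Theory.
Local Open Scope ring_scope.

Lemma ex_maxn_bounded (P : nat -> Prop) b :
  (exists n, P n) -> (forall n, P n -> (n <= b)%N) ->
  exists2 n, P n & forall m, P m -> (m <= n)%N.
Proof.
elim: b => [|b IHb] [n Pn] Pb.
  by exists n => // m /Pb; rewrite leqn0 => /eqP ->.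
have [Pb1 | nPb1] := classic (P b.+1); first by exists b.+1.
apply: IHb => [|m Pm]; first by exists n.
by rewrite -ltnS ltn_neqAle Pb // andbT; apply/eqP => mb; apply: nPb1; rewrite -mb.
Qed.

Lemma nfree_relation (K : finFieldType) (vT : vectType K) n (X : n.-tuple vT) :
  ~~ free X -> exists2 c : {ffun 'I_n -> K}, c != 0 & \sum_i c i *: X`_i = 0.
Proof.
move=> notfree.
suff /existsP[c /andP[c0 /eqP cX]] :
    [exists c : {ffun 'I_n -> K}, (c != 0) && (\sum_i c i *: X`_i == 0)].
  by exists c.
apply: contraR notfree => /existsPn noc; apply/freeP => c cX i.
have := noc [ffun j => c j]; rewrite negb_and negbK => /orP[/eqP/ffunP/(_ i)|].
  by rewrite !ffunE.
by under eq_bigr do rewrite ffunE; rewrite cX eqxx.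
Qed.

Section FiniteExtension.

Variables (F : finFieldType) (L : fieldExtType F).
Local Notation q := #|F|.
Local Notation m := (\dim {:L}).

Lemma card_finvect_vspace (U : {vspace L}) :
  #|(U : {vspace finvect_type L})| = (q ^ \dim U)%N.
Proof. exact: card_vspace. Qed.

Lemma card_finvect : #|finvect_type L| = (q ^ m)%N.
Proof. by rewrite -card_finvect_vspace; apply: eq_card => x; rewrite memvf. Qed.

Lemma exprqD (x y : L) : (x + y) ^+ q = x ^+ q + y ^+ q.
Proof.
have [p _ pcharFp] := finPcharP F; rewrite (card_pprimeChar pcharFp).
elim: (logn _ _) => // n IHn; rewrite expnSr !exprM {}IHn.
by rewrite -(pchar_lalg L) in pcharFp; rewrite -pFrobenius_autE rmorphD.
Qed.

Lemma exprqZ (a : F) (x : L) : (a *: x) ^+ q = a *: x ^+ q.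
Proof. by rewrite -mulr_algl exprMn -in_algE -rmorphXn /= expf_card mulr_algl. Qed.

Definition frobn (i : nat) (x : L) := x ^+ (q ^ i).

Lemma frobn_is_linear i : linear (frobn i).
Proof.
move=> a x y; rewrite /frobn; elim: i => [|i IHi]; first by rewrite !expn0 !expr1.
by rewrite expnSr !exprM IHi exprqD exprqZ.
Qed.

HB.instance Definition _ i :=
  GRing.isLinear.Build F L L *:%R (frobn i) (frobn_is_linear i).

Lemma frobn0 : frobn 0 =1 id.
Proof. by move=> x; rewrite /frobn expn0 expr1. Qed.

Lemma frobnS i x : frobn i.+1 x = frobn 1 (frobn i x).
Proof. by rewrite /frobn expnSr exprM. Qed.

Lemma frobvE n (v : 'rV[L]_n) : frobv v = map_mx (frobn 1) v.
Proof. by []. Qed.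

Definition qpoly r (c : 'rV[L]_r) : {poly L} := \sum_(i < r) c 0 i *: 'X^(q ^ i).

Lemma coef_qpoly r (c : 'rV[L]_r) n :
  (qpoly c)`_n = \sum_(i < r) c 0 i * (n == q ^ i)%N%:R.
Proof. by rewrite coef_sum; apply: eq_bigr => i _; rewrite coefZ coefXn. Qed.

Lemma qpoly_neq0 r (c : 'rV[L]_r) : c != 0 -> qpoly c != 0.
Proof.
case/rV0Pn=> i0; apply: contra_neq => /(congr1 (fun p : {poly L} => p`_(q ^ i0))).
rewrite coef0 coef_qpoly (bigD1 i0) //= eqxx mulr1 big1 ?addr0 // => i ii0.
rewrite eqn_exp2l ?finNzRing_gt1 //.
case: eqP => [/val_inj i0i | _]; last by rewrite mulr0.
by rewrite i0i eqxx in ii0.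
Qed.

Lemma size_qpoly r (c : 'rV[L]_r) : (size (qpoly c) <= q ^ r)%N.
Proof.
apply/leq_sizeP => n rn; rewrite coef_qpoly big1 // => i _.
by rewrite gtn_eqF ?mulr0 // (leq_trans _ rn) // ltn_exp2l ?finNzRing_gt1.
Qed.

Lemma horner_qpoly r (c : 'rV[L]_r) x : (qpoly c).[x] = \sum_i c 0 i * frobn i x.
Proof.
by rewrite horner_sum; apply: eq_bigr => i _; rewrite hornerZ hornerXn.
Qed.

Lemma root_qpoly_span r (c : 'rV[L]_r) n (X : n.-tuple L) :
  {in X, forall x, root (qpoly c) x} -> {in <<X>>%VS, forall x, root (qpoly c) x}.
Proof.
move=> Xroot x /coord_span ->; rewrite rootE horner_qpoly.
under eq_bigr do rewrite linear_sum mulr_sumr.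
rewrite exchange_big big1 //= => j _.
under eq_bigr do rewrite linearZ /= -scalerAr.
rewrite -scaler_sumr -horner_qpoly.
by rewrite (rootP (Xroot _ (mem_nth 0 _))) ?scaler0 ?size_tuple.
Qed.

Lemma qpoly_vanishing r (c : 'rV[L]_r) (U : {vspace L}) :
  (r <= \dim U)%N -> {in U, forall x, root (qpoly c) x} -> c = 0.
Proof.
move=> rU Uroot; apply/eqP; apply: contraT => /qpoly_neq0 c0.
have := max_poly_roots c0 (rs := enum (U : {vspace finvect_type L})).
rewrite enum_uniq -cardE card_finvect_vspace.
have -> : all (root (qpoly c)) (enum (U : {vspace finvect_type L})).
  by apply/allP => x; rewrite (@mem_enum (finvect_type L)); apply: Uroot.
move=> /(_ isT isT) /leq_trans /(_ (size_qpoly c)).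
by rewrite ltnNge leq_exp2l ?finNzRing_gt1 ?rU.
Qed.

Section Pencil.

Variables (r : nat) (a : L) (b e : r.-tuple L).
Hypotheses (a_neq0 : a != 0) (free_e : free e).

Definition pencil mu : r.+1.-tuple L :=
  [tuple of a :: [tuple b`_i + mu * e`_i | i < r]].

Definition pencil_slope (c : {ffun 'I_r.+1 -> F}) : L :=
  - (c ord0 *: a + \sum_(i < r) c (lift ord0 i) *: b`_i)
    / \sum_(i < r) c (lift ord0 i) *: e`_i.

Lemma nth_pencil_lift mu (i : 'I_r) : (pencil mu)`_(lift ord0 i) = b`_i + mu * e`_i.
Proof. by rewrite /= add0n (nth_map i) ?size_enum_ord // nth_ord_enum. Qed.

Lemma pencil_slopeP mu (c : {ffun 'I_r.+1 -> F}) :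
  c != 0 -> \sum_i c i *: (pencil mu)`_i = 0 -> mu = pencil_slope c.
Proof.
move=> c_neq0; rewrite big_ord_recl.
under eq_bigr do rewrite nth_pencil_lift scalerDr scalerAr.
rewrite big_split /= -mulr_sumr addrA.
set D := \sum_(i < r) _ *: e`_i; set N := c ord0 *: a + _ => NDmu.
have D_neq0 : D != 0.
  apply: contra_neq c_neq0 => D0; apply/ffunP => i; rewrite ffunE.
  move/freeP: free_e => /(_ _ D0) c_lift0.
  have /eqP : c ord0 *: a = 0.
    by rewrite -NDmu D0 mulr0 addr0 /N big1 ?addr0 // => i' _; rewrite c_lift0 scale0r.
  rewrite scaler_eq0 (negbTE a_neq0) orbF => /eqP c00.
  by case: (unliftP ord0 i) => [i' ->|->].
apply: (mulIf D_neq0); rewrite /pencil_slope -/N -/D mulfVK //.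
by apply/eqP; rewrite -addr_eq0 addrC NDmu.
Qed.

Lemma exists_free_pencil : (r < m)%N -> exists mu, free (pencil mu).
Proof.
move=> r_lt_m.
suff /forallPn[mu /negbNE] : ~~ [forall mu : finvect_type L, ~~ free (pencil mu)].
  by exists mu.
apply/forallP => nfree.
pose nonzero := [set~ 0 : {ffun 'I_r.+1 -> F}].
have : [set: finvect_type L]
         \subset [set (pencil_slope c : finvect_type L) | c in nonzero].
  apply/subsetP => mu _; have [c c_neq0 rel] := nfree_relation (nfree mu).
  by apply/imsetP; exists c; rewrite ?inE // -(pencil_slopeP c_neq0 rel).
move/subset_leq_card/leq_trans/(_ (leq_imset_card _ _)).
rewrite cardsT card_finvect cardsC1 card_ffun card_ord.
have : (q ^ r.+1 <= q ^ m)%N by rewrite leq_exp2l ?finNzRing_gt1.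
by move/leq_trans => le /le; rewrite leqNgt ltn_predL expn_gt0 (ltnW (finNzRing_gt1 F)).
Qed.

End Pencil.

Variable k : nat.
Implicit Types (v w : 'rV[L]_k) (V : 'M[L]_k).

Lemma map_frobn_sub V v i :
  frobenius_closed V -> (v <= V)%MS -> (map_mx (frobn i) v <= V)%MS.
Proof.
move=> Vfrob vV; elim: i => [|i IHi].
  by rewrite (_ : map_mx _ v = v) //; apply/rowP => j; rewrite mxE frobn0.
rewrite (_ : map_mx _ v = frobv (map_mx (frobn i) v)); first exact: Vfrob.
by apply/rowP => j; rewrite frobvE !mxE frobnS.
Qed.

Definition entries v : k.-tuple L := [tuple v 0 j | j < k].

Lemma rkE v : rk v = \dim <<entries v>>.
Proof. by []. Qed.

Lemma nth_entries v (j : 'I_k) : (entries v)`_j = v 0 j.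
Proof. by rewrite -tnth_nth tnth_mktuple. Qed.

Lemma entries_span v j : v 0 j \in <<entries v>>%VS.
Proof. by rewrite -nth_entries memv_span ?mem_nth ?size_tuple. Qed.

Definition moore v : 'M[L]_(rk v, k) := \matrix_(i, j) frobn i (v 0 j).

Lemma moore_row_free v : row_free (moore v).
Proof.
apply/inj_row_free => c cM0; apply: (@qpoly_vanishing _ c <<entries v>>) => //.
apply: root_qpoly_span => _ /tnthP[j ->]; rewrite tnth_mktuple rootE horner_qpoly.
move/rowP/(_ j): cM0; rewrite !mxE; under eq_bigr do rewrite mxE; by move=> ->.
Qed.

Lemma rk_le_rank V v : frobenius_closed V -> (v <= V)%MS -> (rk v <= \rank V)%N.
Proof.
move=> Vfrob vV; rewrite -(eqP (moore_row_free v)); apply: mxrankS.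
apply/row_subP => i; rewrite (_ : row i _ = map_mx (frobn i) v).
  exact: map_frobn_sub.
by apply/rowP => j; rewrite !mxE.
Qed.

Definition lincomb v (a : 'rV[F]_k) : L := \sum_j a 0 j *: v 0 j.

Lemma lincomb_is_linear v : linear (lincomb v).
Proof.
move=> c a b; rewrite /lincomb scaler_sumr -big_split /=.
by apply: eq_bigr => j _; rewrite !mxE scalerDl scalerA.
Qed.

HB.instance Definition _ v :=
  GRing.isLinear.Build F 'rV[F]_k L *:%R (lincomb v) (lincomb_is_linear v).

Lemma lincomb_span v a : lincomb v a \in <<entries v>>%VS.
Proof. by apply: memv_suml => j _; rewrite memvZ ?entries_span. Qed.

Lemma lincombDl v w mu a : lincomb (v + mu *: w) a = lincomb v a + mu * lincomb w a.
Proof.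
rewrite /lincomb mulr_sumr -big_split /=; apply: eq_bigr => j _.
by rewrite !mxE scalerDr scalerAr.
Qed.

Lemma lincomb_delta v j : lincomb v (delta_mx 0 j) = v 0 j.
Proof.
rewrite /lincomb (bigD1 j) //= big1 => [|i /negbTE ij]; rewrite mxE.
  by rewrite !eqxx scale1r addr0.
by rewrite ij andbF scale0r.
Qed.

Definition span_coefs v (y : L) : 'rV[F]_k := \row_j coord (entries v) j y.

Lemma lincomb_coefs v y : y \in <<entries v>>%VS -> lincomb v (span_coefs v y) = y.
Proof.
move/coord_span => {2}->; apply: eq_bigr => j _.
by rewrite mxE nth_entries.
Qed.

Definition coordmx v : 'M[L]_(rk v, k) :=
  map_mx (in_alg L) (\matrix_(i, j) coord (vbasis <<entries v>>) i (v 0 j)).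

Lemma sub_coordmx v w :
  (forall a, lincomb v a = 0 -> lincomb w a = 0) -> (w <= coordmx v)%MS.
Proof.
move=> vw; set e := vbasis <<entries v>>.
have e_span (i : 'I_(rk v)) : e`_i \in <<entries v>>%VS.
  exact: vbasis_mem (memt_nth 0 _ (ltn_ord i)).
apply/submxP; exists (\row_i lincomb w (span_coefs v e`_i)); apply/rowP => j.
pose a := delta_mx 0 j - \sum_i coord e i (v 0 j) *: span_coefs v e`_i.
have /vw : lincomb v a = 0.
  rewrite /a linearB /= [lincomb v (\sum_i _)]linear_sum lincomb_delta /=.
  under eq_bigr do rewrite linearZ /= lincomb_coefs //.
  by rewrite -coord_vbasis ?entries_span ?subrr.
rewrite /a linearB /= [lincomb w (\sum_i _)]linear_sum lincomb_delta.
move=> /eqP; rewrite subr_eq0 => /eqP ->.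
by rewrite !mxE; apply: eq_bigr => i _; rewrite !mxE linearZ /= mulr_algr.
Qed.

Lemma frobv_mul_alg n (u : 'rV[L]_n) (M : 'M[F]_(n, k)) :
  frobv (u *m map_mx (in_alg L) M) = frobv u *m map_mx (in_alg L) M.
Proof.
apply/rowP => j; rewrite !frobvE !mxE raddf_sum; apply: eq_bigr => i _.
by rewrite !mxE mulr_algr /= linearZ /= mulr_algr.
Qed.

Lemma frob_closed_alg V n (M : 'M[F]_(n, k)) :
  (V :=: map_mx (in_alg L) M)%MS -> frobenius_closed V.
Proof.
by move=> eqVM v; rewrite !eqVM => /submxP[u ->]; rewrite frobv_mul_alg submxMl.
Qed.

Lemma lincomb_ker_maxrk v w a :
  (forall mu, (rk (w + mu *: v) <= rk v)%N) -> (rk v < m)%N ->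
  lincomb v a = 0 -> lincomb w a = 0.
Proof.
move=> w_rk rk_lt_m va; apply/eqP; apply: contraT => wa.
set e := vbasis <<entries v>>.
pose b := [tuple lincomb w (span_coefs v e`_i) | i < rk v].
have [mu free_mu] := exists_free_pencil b wa (basis_free (vbasisP _)) rk_lt_m.
have : (<<pencil (lincomb w a) b e mu>> <= <<entries (w + mu *: v)>>)%VS.
  apply/span_subvP => _ /tnthP[i ->]; rewrite (tnth_nth 0).
  case: (unliftP ord0 i) => [i' ->|->]; last first.
    by rewrite /= -[lincomb w a]addr0 -(mulr0 mu) -va -lincombDl lincomb_span.
  rewrite nth_pencil_lift /b -tnth_nth tnth_mktuple.
  rewrite -{2}(lincomb_coefs (vbasis_mem (memt_nth 0 _ (ltn_ord i')))).
  by rewrite -lincombDl lincomb_span.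
move/dimvS; rewrite (eqP free_mu) size_tuple => /leq_trans/(_ (w_rk mu)).
by rewrite ltnn.
Qed.

Lemma sub_coordmx_maxrk V v :
  (v <= V)%MS -> (forall w, (w <= V)%MS -> (rk w <= rk v)%N) ->
  (rk v < m)%N -> (V <= coordmx v)%MS.
Proof.
move=> vV v_max rk_lt_m; apply/row_subP => i; apply: sub_coordmx => a va.
apply: lincomb_ker_maxrk va => // mu; apply: v_max.
by rewrite addmx_sub ?row_sub ?scalemx_sub.
Qed.

Lemma exists_maxrk V :
  exists2 v, (v <= V)%MS & forall w, (w <= V)%MS -> (rk w <= rk v)%N.
Proof.
pose P n := exists2 v, (v <= V)%MS & rk v = n.
have [n [v vV <-] v_max] : exists2 n, P n & forall n', P n' -> (n' <= n)%N.
  apply: (@ex_maxn_bounded P k) => [|n [v _ <-]].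
    by exists (rk (0 : 'rV[L]_k)), 0; rewrite ?sub0mx.
  by rewrite rkE (leq_trans (dim_span _)) ?size_tuple.
by exists v => // w wV; apply: v_max; exists w.
Qed.

Lemma rank_le_maxrk V v :
  (k <= m)%N -> (v <= V)%MS ->
  (forall w, (w <= V)%MS -> (rk w <= rk v)%N) -> (\rank V <= rk v)%N.
Proof.
move=> k_le_m vV v_max; have [rk_lt_m | m_le_rk] := ltnP (rk v) (m).
  exact: leq_trans (mxrankS (sub_coordmx_maxrk vV v_max rk_lt_m)) (rank_leq_row _).
exact: leq_trans (rank_leq_col V) (leq_trans k_le_m m_le_rk).
Qed.

Lemma frob_closed_maxrk V v :
  (k <= m)%N -> (v <= V)%MS ->
  (forall w, (w <= V)%MS -> (rk w <= rk v)%N) -> rk v = \rank V ->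
  frobenius_closed V.
Proof.
move=> k_le_m vV v_max rkV; have [rk_lt_m | m_le_rk] := ltnP (rk v) (m).
  have V_sub := sub_coordmx_maxrk vV v_max rk_lt_m.
  suff /eqmxP V_eq : (V == coordmx v)%MS by apply: frob_closed_alg V_eq.
  rewrite -(mxrank_leqif_eq V_sub).2.
  by rewrite eqn_leq mxrankS //= -rkV rank_leq_row.
move=> w _; apply: submx_full.
by rewrite /row_full eqn_leq rank_leq_col -rkV (leq_trans k_le_m m_le_rk).
Qed.

End FiniteExtension.

Theorem theorem3p11 (F : finFieldType) (L : fieldExtType F) (k : nat)
    (Hk1 : (1 <= k)%N) (Hkm : (k <= \dim {:L})%N) (V : 'M[L]_k) :
  frobenius_closed V <-> is_maxrk V (\rank V).
Proof.
split=> [V_frob | [[v vV rkV] v_max]].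
  have [v vV v_max] := exists_maxrk V.
  have rkV : rk v = \rank V.
    by apply/eqP; rewrite eqn_leq rk_le_rank ?rank_le_maxrk.
  by split=> [|w /v_max]; [exists v | rewrite rkV].
by apply: (frob_closed_maxrk Hkm vV) => // w /v_max; rewrite rkV.
Qed.
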